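(* Let $m_1\le m_2\le\dots\le m_k$ be nonnegative integers, $n=\sum_r m_r$, and $T_1,\dots,T_n\in\{H,L\}$ with $0\le H<L$. Let $q^{(t)}_r$ be the capacity variables computed by Algorithm 1 on this input, with $q^{(t)}_0:=0$. For a look-ahead setup $(r,h)$ with $1\le r\le h\le k$ and a task index $t$, define $Z^{(r,h,t)}_L=\sum_{i=1}^{h-1}\min\{q^{(t)}_i,q^{(t)}_{r-1}\}$ and $Z^{(r,h,t)}_H=\sum_{i=r}^{h}(q^{(t)}_i-q^{(t)}_{r-1})$ (the L-zone and H-zone sizes when the algorithm allocates task $t$ under setup $(r,h)$). Then for all $1\le i<j\le n$, $$Z^{(r,h,i)}_H+Z^{(r,h,i)}_L+i-1\;\le\;Z^{(r,h,j)}_H+Z^{(r,h,j)}_L+j-1.$$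
   Context: Algorithm 1 (simulation-based threshold algorithm). Input: integers $0\le m_1\le\dots\le m_k$ and a sequence $T_1,\dots,T_n$ with $n=\sum_r m_r$. Set $q^{(1)}_r=m_r$ for all $r$. For $t=1,\dots,n$: set $x_t=\mathrm{TA}(q^{(t)}_1,\dots,q^{(t)}_k;\,T_t,T_{t+1},\dots,T_n)$ and $q^{(t+1)}_r=q^{(t)}_r-\mathbf{1}(x_t=r)$ for each $r$. Output $\mathbf{x}=(x_1,\dots,x_n)$. Subroutine $\mathrm{TA}(m_1,\dots,m_k;\,S_1,\dots,S_N)$ (ThresholdAllocation), with the convention $m_0:=0$: for $\gamma=k,k-1,\dots,1$: if $m_\gamma=m_{\gamma-1}$, go to the next $\gamma$; otherwise, for $h=\gamma,\gamma+1,\dots,k$: let $Z_L=\sum_{i=1}^{h-1}\min\{m_i,m_{\gamma-1}\}$ and $Z_H=\sum_{i=\gamma}^{h}(m_i-m_{\gamma-1})$; if $|\{i\in\{1,\dots,Z_L+Z_H\}: S_i>S_1\}|\ge Z_L$, return $\gamma$ (agent to which $S_1$ is assigned). *)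

From HB Require Import structures.
From mathcomp Require Import all_boot all_order all_algebra.
Set Implicit Arguments. Unset Strict Implicit. Unset Printing Implicit Defensive.
Import Order.TTheory GRing.Theory Num.Theory.

(* Capacity vectors are sequences q = [:: q_1; ...; q_k] of naturals.
   qget q r = q_r for 1 <= r <= k, with the convention q_0 := 0. *)
Definition qget (q : seq nat) (r : nat) : nat :=
  if r is j.+1 then nth 0%N q j else 0%N.

Definition ZL (q : seq nat) (g h : nat) : nat :=
  (\sum_(1 <= i < h) minn (qget q i) (qget q g.-1))%N.

Definition ZH (q : seq nat) (g h : nat) : nat :=
  (\sum_(g <= i < h.+1) (qget q i - qget q g.-1))%N.

Definition nbigger (R : realDomainType) (S : seq R) (N : nat) : nat :=
  count (fun x => nth 0%R S 0 < x)%R (take N S).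

Definition TA_test (R : realDomainType) (q : seq nat) (S : seq R) (g h : nat) : bool :=
  (ZL q g h <= nbigger S (ZL q g h + ZH q g h))%N.

(* ThresholdAllocation(q_1..q_k; S_1..S_N): gamma runs k, k-1, ..., 1; gamma is
   skipped if q_gamma = q_(gamma-1); otherwise gamma is returned as soon as the
   test succeeds for some h in gamma..k.  Returns 0 if no gamma is returned. *)
Definition TA (R : realDomainType) (q : seq nat) (S : seq R) : nat :=
  let k := size q in
  let gs := rev (iota 1 k) in
  let P := fun g => (qget q g != qget q g.-1) &&
                    has (fun h => TA_test q S g h) (iota g (k.+1 - g)) in
  nth 0%N gs (find P gs).

Definition decr (q : seq nat) (x : nat) : seq nat :=
  mkseq (fun i => nth 0%N q i - (x == i.+1)) (size q).

Fixpoint caps_from (R : realDomainType) (q : seq nat) (T : seq R) (s : nat)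
  : seq nat :=
  match s with
  | 0 => q
  | s'.+1 => caps_from (decr q (TA q T)) (behead T) s'
  end.

(* q^{(t)} computed by Algorithm 1 on input m, T (t >= 1). *)
Definition caps (R : realDomainType) (m : seq nat) (T : seq R) (t : nat) : seq nat :=
  caps_from m T t.-1.

From HB Require Import structures.
From mathcomp Require Import all_boot all_order all_algebra.
From mathcomp Require Import zify.
Import Order.TTheory GRing.Theory Num.Theory.

Set Implicit Arguments.
Unset Strict Implicit.

(* Write Phi(q) = Z_H + Z_L for a fixed setup (r, h).  Every step of
   Algorithm 1 removes one unit of capacity from an agent x that is either 0
   (no allocation) or strictly above all agents before it, so the capacity
   vector stays nondecreasing.  Splitting Phi into one contribution per agent,
   only agent x's contribution can drop (by one), except when x = r - 1: then
   the threshold q_{r-1} drops, which lowers the L-zone term of every agent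
   i >= r by one but raises its H-zone term by one.  Hence Phi drops by at
   most one per step, i.e. Phi(q^(t)) + t - 1 is nondecreasing in t. *)

Definition nondecreasing_caps (q : seq nat) :=
  forall i j, i <= j -> j <= size q -> qget q i <= qget q j.

Definition admissible_agent (q : seq nat) (x : nat) :=
  (x == 0) || ((0 < x <= size q) && (qget q x != qget q x.-1)).

Lemma size_decr q x : size (decr q x) = size q.
Proof. by rewrite size_mkseq. Qed.

Lemma qget_decr q x i : qget (decr q x) i = qget q i - (i == x).
Proof.
case: i => [|j] /=; first by rewrite sub0n.
have [lt_j_q | le_q_j] := ltnP j (size q); first by rewrite nth_mkseq // eq_sym.
by rewrite !nth_default ?size_mkseq.
Qed.

Lemma sorted_nondecreasing_caps m : sorted leq m -> nondecreasing_caps m.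
Proof.
move=> sorted_m [|i] [|j] //= le_ij le_j_m.
by apply: (sorted_leq_nth leq_trans leqnn) => //; rewrite inE; lia.
Qed.

Lemma TA_admissible (R : realDomainType) q (S : seq R) :
  admissible_agent q (TA q S).
Proof.
rewrite /admissible_agent /TA; set gs := rev _; set P := fun g => _.
have [hasP | hasNP] := boolP (has P gs); last first.
  by rewrite nth_default // leqNgt -has_find hasNP.
have /andP[neq_q _] := nth_find 0 hasP.
have : nth 0 gs (find P gs) \in gs by rewrite mem_nth // -has_find.
by rewrite mem_rev mem_iota neq_q andbT; lia.
Qed.

Section OneStep.

Variables (q : seq nat) (x : nat).
Hypotheses (mono_q : nondecreasing_caps q) (adm_x : admissible_agent q x).

Lemma admissible_agent_top i : x != 0 -> i < x -> qget q i < qget q x.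
Proof.
move: adm_x => /orP[/eqP-> // | /andP[/andP[x_gt0 x_le] neq_q]] _ lt_ix.
have := @mono_q i x.-1 ltac:(lia) ltac:(lia).
have := @mono_q x.-1 x ltac:(lia) x_le.
by move: neq_q; rewrite neq_ltn => /orP[] ? ? ?; lia.
Qed.

Lemma nondecreasing_caps_decr : nondecreasing_caps (decr q x).
Proof.
move=> i j le_ij; rewrite size_decr => le_j_q; rewrite !qget_decr.
have := mono_q le_ij le_j_q.
have [eq_jx | neq_jx] := eqVneq j x; last lia.
subst j; have [-> | neq_ix] := eqVneq i x; first lia.
have [x0 | /admissible_agent_top top] := eqVneq x 0; first lia.
have := top i; lia.
Qed.

End OneStep.

Definition zone_weight q r h i :=
  (if i < h then minn (qget q i) (qget q r.-1) else 0) +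
  (if r <= i then qget q i - qget q r.-1 else 0).

Lemma zones_sum_weight q r h : 1 <= r -> r <= h ->
  ZH q r h + ZL q r h = \sum_(0 <= i < h.+1) zone_weight q r h i.
Proof.
move=> r_gt0 le_rh; rewrite big_ltn // {1}/zone_weight min0n if_same.
rewrite ifN; last lia.
rewrite add0n big_split /= add0n [ZH q r h + _]addnC; congr (_ + _).
  rewrite big_nat_recr /=; last lia.
  by rewrite ltnn addn0; apply: eq_big_nat => i /andP[_ ->].
rewrite (big_cat_nat _ (n := r)) //=; last lia.
rewrite big1_seq ?add0n; last first.
  by move=> i /andP[_]; rewrite mem_index_iota => /andP[_ lt_ir]; rewrite leqNgt lt_ir.
by apply: eq_big_nat => i /andP[-> _].
Qed.

Lemma zone_weight_decr q x r h i :
  nondecreasing_caps q -> admissible_agent q x -> 1 <= r ->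
  zone_weight q r h i <= zone_weight (decr q x) r h i + (i == x).
Proof.
move=> mono_q adm_x r_gt0; rewrite /zone_weight !qget_decr.
have [x_thr | x_thr] := eqVneq r.-1 x; last first.
  by case: (i < h); case: (r <= i); case: (i == x); rewrite /=; lia.
have [x0 | x_gt0] := eqVneq x 0.
  rewrite x0 in x_thr *; rewrite x_thr /=.
  by case: (i < h); case: (r <= i); rewrite /=; lia.
have top := admissible_agent_top mono_q adm_x x_gt0.
rewrite -x_thr in top *.
have [lt_i | gt_i | ->] := ltngtP i r.-1.
- have := top i lt_i; have -> : (r <= i) = false by lia.
  by case: (i < h); lia.
- have -> : (r <= i) = true by lia.
  by case: (i < h); lia.
- have -> : (r <= r.-1) = false by lia.
  by case: (r.-1 < h); lia.
Qed.

Lemma sum_nat_eqb x n : \sum_(0 <= i < n) (i == x) = (x < n).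
Proof.
elim: n => [|n IHn]; first by rewrite big_geq.
by rewrite big_nat_recr //= IHn ltnS; case: (ltngtP x n); lia.
Qed.

Lemma zones_decr q x r h :
  nondecreasing_caps q -> admissible_agent q x -> 1 <= r -> r <= h ->
  ZH q r h + ZL q r h <= ZH (decr q x) r h + ZL (decr q x) r h + 1.
Proof.
move=> mono_q adm_x r_gt0 le_rh; rewrite !zones_sum_weight //.
apply: leq_trans (_ : \sum_(0 <= i < h.+1)
    (zone_weight (decr q x) r h i + (i == x)) <= _).
  by apply: leq_sum => i _; apply: zone_weight_decr.
by rewrite big_split /= sum_nat_eqb leq_add2l leq_b1.
Qed.

Lemma caps_fromD (R : realDomainType) q (T : seq R) a b :
  caps_from q T (a + b) = caps_from (caps_from q T a) (drop a T) b.
Proof.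
elim: a q T => [|a IHa] q T /=; first by rewrite drop0.
by rewrite IHa -drop1 drop_drop addn1.
Qed.

Lemma nondecreasing_caps_from (R : realDomainType) q (T : seq R) s :
  nondecreasing_caps q -> nondecreasing_caps (caps_from q T s).
Proof.
elim: s q T => [|s IHs] q T mono_q //=.
by apply/IHs/nondecreasing_caps_decr/TA_admissible.
Qed.

Lemma zones_caps_from (R : realDomainType) q (T : seq R) s r h :
  nondecreasing_caps q -> 1 <= r -> r <= h ->
  ZH q r h + ZL q r h <=
  ZH (caps_from q T s) r h + ZL (caps_from q T s) r h + s.
Proof.
move=> + r_gt0 le_rh; elim: s q T => [|s IHs] q T mono_q /=.
  by rewrite addn0.
have adm := TA_admissible q T.
have := zones_decr mono_q adm r_gt0 le_rh.
have := IHs (decr q (TA q T)) (behead T) (nondecreasing_caps_decr mono_q adm).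
lia.
Qed.

Theorem lemma4 (R : realDomainType) (H L : R) (m : seq nat) (T : seq R) :
  (0 <= H)%R -> (H < L)%R ->
  sorted leq m ->
  size T = sumn m ->
  all (fun x => (x == H) || (x == L)) T ->
  forall r h : nat, (1 <= r)%N -> (r <= h)%N -> (h <= size m)%N ->
  forall i j : nat, (1 <= i)%N -> (i < j)%N -> (j <= size T)%N ->
  (ZH (caps m T i) r h + ZL (caps m T i) r h + i - 1 <=
   ZH (caps m T j) r h + ZL (caps m T j) r h + j - 1)%N.
Proof.
move=> _ _ sorted_m _ _ r h r_gt0 le_rh _ i j i_gt0 lt_ij _.
rewrite /caps (_ : j.-1 = i.-1 + (j - i)); last lia.
rewrite caps_fromD.
have mono_i : nondecreasing_caps (caps_from m T i.-1).
  exact/nondecreasing_caps_from/sorted_nondecreasing_caps.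
have := zones_caps_from (drop i.-1 T) (j - i) mono_i r_gt0 le_rh.
lia.
Qed.
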